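(* Let $0<q<1$, $0\le p<1$, $z\in\mathbb C$ and $t\in\mathbb C$ with $|t|<1$. Then \[ \sum_{n=0}^\infty\frac{(p;q)_n}{(q;q)_n} \biggl(\sum_{k=0}^n\begin{bmatrix}n\\k\end{bmatrix}_q \frac{q^{k^2+k/2}}{(p;q)_k}z^k\biggr) t^n= \frac{(pt;q)_\infty}{(t;q)_\infty} \sum_{n=0}^\infty\frac{q^{n^2+n/2}}{(pt;q)_n(q;q)_n}(zt)^n . \]
   Context: For $a\in\mathbb C$ and $n\in\{0,1,2,\dots\}\cup\{\infty\}$, $(a;q)_n=\prod_{k=1}^n(1-aq^{k-1})$ (empty product $=1$). The Gaussian $q$-binomial coefficient is $\begin{bmatrix}n\\k\end{bmatrix}_q=\frac{(q;q)_n}{(q;q)_k(q;q)_{n-k}}$. *)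

From Stdlib Require Import Reals.
From Coquelicot Require Import Coquelicot.
From Coquelicot Require Export Complex.
Open Scope C_scope.

Fixpoint qpoch (a : C) (q : R) (n : nat) : C :=
  match n with
  | O => 1
  | S m => qpoch a q m * (1 - a * RtoC (q ^ m))
  end.

Definition qbinom (q : R) (n k : nat) : C :=
  qpoch (RtoC q) q n / (qpoch (RtoC q) q k * qpoch (RtoC q) q (n - k)).

Definition qpoch_inf_is (a : C) (q : R) (L : C) : Prop :=
  filterlim (fun n => qpoch a q n) eventually (locally L).

(* q^(k^2 + k/2) for 0 < q, as a real number *)
Definition qexp (q : R) (k : nat) : R := q ^ (k * k) * (sqrt q) ^ k.

From Stdlib Require Import Reals Lra Lia.
From Coquelicot Require Import Coquelicot Complex.
Open Scope C_scope.

(* Expanding the q-binomial coefficient and writing (p;q)_n = (p;q)_k (pq^k;q)_(n-k), the n-th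
   coefficient of the left-hand side is the convolution over k + m = n of
   u_k = q^(k^2+k/2) (zt)^k / (q;q)_k and (pq^k;q)_m / (q;q)_m t^m.  Summing over m first,
   the q-binomial theorem gives (ptq^k;q)_oo / (t;q)_oo = (pt;q)_oo / ((pt;q)_k (t;q)_oo),
   which is the right-hand side.  The interchange of summations is Tannery's theorem: the
   inner partial sums are bounded uniformly in k, while u_k decays superexponentially.
   The q-binomial theorem itself follows by iterating the functional equation
   (1 - x) F(x) = (1 - a x) F(q x) of F(x) = sum_m (a;q)_m / (q;q)_m x^m and using
   F(q^n x) -> 1. *)

(** * Limits and series of complex sequences *)

Lemma Clim_iff_Cmod (u : nat -> C) (a : C) :
  filterlim u eventually (locally a) <-> is_lim_seq (fun n => Cmod (u n - a)) 0%R.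
Proof.
  rewrite (@filterlim_locally_ball_norm C_AbsRing nat C_NormedModule eventually _ u a).
  rewrite <- is_lim_seq_spec; unfold is_lim_seq', ball_norm.
  split; intros H eps; specialize (H eps); eapply filter_imp; try apply H;
    intros n Hn; simpl in *; rewrite Rminus_0_r, Rabs_pos_eq in *; try apply Cmod_ge_0; exact Hn.
Qed.

Lemma Clim_plus (u v : nat -> C) (a b : C) :
  filterlim u eventually (locally a) -> filterlim v eventually (locally b) ->
  filterlim (fun n => u n + v n) eventually (locally (a + b)).
Proof.
  intros Hu Hv; eapply filterlim_comp_2; [exact Hu | exact Hv |].
  exact (@filterlim_plus C_AbsRing C_NormedModule a b).
Qed.

Lemma Clim_mult (u v : nat -> C) (a b : C) :
  filterlim u eventually (locally a) -> filterlim v eventually (locally b) ->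
  filterlim (fun n => u n * v n) eventually (locally (a * b)).
Proof.
  rewrite !Clim_iff_Cmod; intros Hu Hv.
  apply (is_lim_seq_le_le (fun _ => 0%R) _
    (fun n => (Cmod (u n - a) + Cmod a) * Cmod (v n - b) + Cmod b * Cmod (u n - a))%R).
  - intros n; split; [apply Cmod_ge_0 |].
    replace (u n * v n - a * b) with (u n * (v n - b) + b * (u n - a)) by ring.
    eapply Rle_trans; [apply Cmod_triangle |]; rewrite !Cmod_mult.
    apply Rplus_le_compat_r, Rmult_le_compat_r; [apply Cmod_ge_0 |].
    replace (u n) with ((u n - a) + a) at 1 by ring; apply Cmod_triangle.
  - apply is_lim_seq_const.
  - replace 0%R with ((0 + Cmod a) * 0 + Cmod b * 0)%R by ring.
    apply is_lim_seq_plus'; apply is_lim_seq_mult'; auto using is_lim_seq_const.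
    apply is_lim_seq_plus'; auto using is_lim_seq_const.
Qed.

Lemma Clim_unique (u : nat -> C) (a b : C) :
  filterlim u eventually (locally a) -> filterlim u eventually (locally b) -> a = b.
Proof.
  intros; eapply (@filterlim_locally_unique nat C_AbsRing C_NormedModule); eauto.
  apply Proper_StrongProper, eventually_filter.
Qed.

Lemma Clim_Cmod (u : nat -> C) (a : C) :
  filterlim u eventually (locally a) -> is_lim_seq (fun n => Cmod (u n)) (Cmod a).
Proof.
  intros H; eapply filterlim_comp; [apply H |].
  apply (@filterlim_norm C_AbsRing C_NormedModule).
Qed.

Lemma Clim_Cmod_le (u : nat -> C) (a : C) (b : R) :
  filterlim u eventually (locally a) -> (forall n, Cmod (u n) <= b)%R -> (Cmod a <= b)%R.
Proof.
  intros H Hb; exact (is_lim_seq_le _ (fun _ => b) _ b Hb (Clim_Cmod _ _ H) (is_lim_seq_const b)).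
Qed.

Lemma Clim_Cmod_ge (u : nat -> C) (a : C) (b : R) :
  filterlim u eventually (locally a) -> (forall n, b <= Cmod (u n))%R -> (b <= Cmod a)%R.
Proof.
  intros H Hb; exact (is_lim_seq_le (fun _ => b) _ b _ Hb (is_lim_seq_const b) (Clim_Cmod _ _ H)).
Qed.

Lemma Clim_eq0_of_geom_bound (u : nat -> C) (a : C) (c r : R) :
  (0 <= r < 1)%R -> filterlim u eventually (locally a) ->
  (forall n, Cmod (u n) <= c * r ^ n)%R -> a = 0.
Proof.
  intros Hr H Hb.
  assert (Hg : is_lim_seq (fun n => c * r ^ n)%R (c * 0)%R).
  { apply is_lim_seq_mult'; [apply is_lim_seq_const |].
    apply is_lim_seq_geom; rewrite Rabs_pos_eq; lra. }
  assert (Ha := is_lim_seq_le _ _ _ _ Hb (Clim_Cmod _ _ H) Hg); simpl in Ha.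
  apply Cmod_eq_0; assert (Hpos := Cmod_ge_0 a); lra.
Qed.

Lemma filterlim_shift_iff {T : Type} (F : (T -> Prop) -> Prop) (u : nat -> T) (k : nat) :
  filterlim (fun n => u (n + k)%nat) eventually F <-> filterlim u eventually F.
Proof.
  split; intros H P HP; destruct (H P HP) as [N HN].
  - exists (N + k)%nat; intros n Hn; replace n with (n - k + k)%nat by lia; apply HN; lia.
  - exists N; intros n Hn; apply HN; lia.
Qed.

Lemma filterlim_sub_nat {T : Type} (F : (T -> Prop) -> Prop) (u : nat -> T) (k : nat) :
  filterlim u eventually F -> filterlim (fun n => u (n - k)%nat) eventually F.
Proof.
  intros H P HP; destruct (H P HP) as [N HN].
  exists (N + k)%nat; intros n Hn; apply HN; lia.
Qed.

Lemma ex_series_Cmod_le (a : nat -> C) (b : nat -> R) :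
  (forall n, Cmod (a n) <= b n)%R -> ex_series b -> ex_series a.
Proof. exact (@ex_series_le C_AbsRing C_CompleteNormedModule a b). Qed.

Lemma is_series_C_unique (u : nat -> C) (a b : C) : is_series u a -> is_series u b -> a = b.
Proof. apply Clim_unique. Qed.

Lemma Cmod_sum_n_le (u : nat -> C) (n : nat) :
  (Cmod (sum_n u n) <= sum_n (fun k => Cmod (u k)) n)%R.
Proof. exact (@norm_sum_n_m C_AbsRing C_NormedModule u 0 n). Qed.

Lemma sum_n_Rle (u v : nat -> R) (n : nat) : (forall k, u k <= v k)%R -> (sum_n u n <= sum_n v n)%R.
Proof. apply sum_n_m_le. Qed.

Lemma is_series_Cmod_le (h : nat -> C) (b : nat -> R) (l : C) (lb : R) :
  is_series h l -> (forall m, Cmod (h m) <= b m)%R -> is_series b lb -> (Cmod l <= lb)%R.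
Proof.
  intros Hh Hb Hlb.
  refine (is_lim_seq_le _ (sum_n b) _ lb _ (Clim_Cmod _ _ Hh) Hlb).
  intros n; eapply Rle_trans; [apply Cmod_sum_n_le | apply sum_n_Rle, Hb].
Qed.

Lemma sum_n_le_is_series (M : nat -> R) (SM : R) (N : nat) :
  (forall k, 0 <= M k)%R -> is_series M SM -> (sum_n M N <= SM)%R.
Proof.
  intros HM0 HM.
  assert (Hlim : is_lim_seq (sum_n M) SM) by exact HM.
  apply (is_lim_seq_incr_n _ N) in Hlim.
  refine (is_lim_seq_le (fun _ => sum_n M N) _ _ _ _ (is_lim_seq_const _) Hlim).
  induction n as [|n IH]; [rewrite Nat.add_0_l; lra |].
  replace (S n + N)%nat with (S (n + N)) by lia.
  rewrite sum_Sn; unfold plus; simpl; specialize (HM0 (S (n + N))); lra.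
Qed.

Lemma is_series_geom_scal (c r : R) :
  (0 <= r < 1)%R -> is_series (fun n => c * r ^ n)%R (c / (1 - r))%R.
Proof.
  intros Hr; apply (@is_series_scal_l R_AbsRing R_NormedModule c).
  apply is_series_geom; rewrite Rabs_pos_eq; lra.
Qed.

Lemma Cminus_0_r (w : C) : w - 0 = w.
Proof. ring. Qed.

Lemma Csum_n_S (u : nat -> C) (n : nat) : sum_n u (S n) = sum_n u n + u (S n).
Proof. rewrite sum_Sn; reflexivity. Qed.

Lemma Csum_n_ext_loc (u v : nat -> C) (n : nat) :
  (forall k, (k <= n)%nat -> u k = v k) -> sum_n u n = sum_n v n :> C.
Proof. apply sum_n_ext_loc. Qed.

Lemma Csum_n_plus (u v : nat -> C) (n : nat) :
  sum_n (fun k => u k + v k) n = sum_n u n + sum_n v n :> C.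
Proof. induction n; [rewrite !sum_O; reflexivity | rewrite !Csum_n_S, IHn; ring]. Qed.

Lemma Csum_n_minus (u v : nat -> C) (n : nat) :
  sum_n (fun k => u k - v k) n = sum_n u n - sum_n v n :> C.
Proof. induction n; [rewrite !sum_O; reflexivity | rewrite !Csum_n_S, IHn; ring]. Qed.

Lemma Csum_n_mult_l (c : C) (u : nat -> C) (n : nat) :
  sum_n (fun k => c * u k) n = c * sum_n u n :> C.
Proof. induction n; [rewrite !sum_O; reflexivity | rewrite !Csum_n_S, IHn; ring]. Qed.

Lemma Csum_n_antidiagonal (w : nat -> nat -> C) (N : nat) :
  sum_n (fun n => sum_n (fun k => w k (n - k)%nat) n) N
  = sum_n (fun k => sum_n (w k) (N - k)) N :> C.
Proof.
  induction N as [|N IH]; [rewrite !sum_O; reflexivity |].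
  rewrite Csum_n_S, IH, (Csum_n_S (fun k => sum_n (w k) (S N - k))).
  rewrite (Csum_n_ext_loc (fun k => sum_n (w k) (S N - k))
             (fun k => sum_n (w k) (N - k) + w k (S N - k)%nat)).
  - rewrite Csum_n_plus, Csum_n_S, Nat.sub_diag, sum_O; ring.
  - intros k Hk; replace (S N - k)%nat with (S (N - k)) by lia; apply Csum_n_S.
Qed.

Lemma is_lim_seq_sum_n_0 (h : nat -> nat -> R) (K : nat) :
  (forall k, is_lim_seq (fun N => h N k) 0%R) -> is_lim_seq (fun N => sum_n (h N) K) 0%R.
Proof.
  intros H; induction K as [|K IH].
  - apply (is_lim_seq_ext (fun N => h N 0%nat)); [intros; rewrite sum_O |]; auto.
  - apply (is_lim_seq_ext (fun N => sum_n (h N) K + h N (S K))%R); [intros; rewrite sum_Sn; auto |].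
    replace 0%R with (0 + 0)%R by ring; apply is_lim_seq_plus'; auto.
Qed.

Lemma sum_n_m_tail_le (M : nat -> R) (SM : R) (K N : nat) :
  (forall k, 0 <= M k)%R -> is_series M SM -> (K <= N)%nat ->
  (sum_n_m M (S K) N <= SM - sum_n M K)%R.
Proof.
  intros HM0 HM HKN; assert (HN := sum_n_le_is_series M SM N HM0 HM).
  unfold sum_n in *; rewrite (sum_n_m_Chasles _ 0 K N) in HN by lia.
  unfold plus in HN; simpl in HN; lra.
Qed.

Theorem tannery (f : nat -> nat -> C) (g : nat -> C) (M : nat -> R) (G : C) :
  (forall N k, Cmod (f N k) <= M k)%R -> ex_series M ->
  (forall k, filterlim (fun N => f N k) eventually (locally (g k))) -> is_series g G ->
  filterlim (fun N => sum_n (f N) N) eventually (locally G).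
Proof.
  intros Hf [SM HM] Hlim HG.
  assert (Hg : forall k, (Cmod (g k) <= M k)%R)
    by (intros k; exact (Clim_Cmod_le _ _ _ (Hlim k) (fun N => Hf N k))).
  assert (HM0 : forall k, (0 <= M k)%R)
    by (intros k; eapply Rle_trans; [apply Cmod_ge_0 | apply Hg]).
  apply (filterlim_ext (fun N => sum_n (fun k => f N k - g k) N + sum_n g N));
    [intros N; rewrite Csum_n_minus; ring |].
  replace G with (0 + G) by ring; apply Clim_plus; [| exact HG].
  apply Clim_iff_Cmod, is_lim_seq_spec; intros eps.
  assert (He : (0 < eps / 4)%R) by (destruct eps; simpl; lra).
  assert (HMlim : is_lim_seq (sum_n M) SM) by exact HM.
  destruct (proj2 (is_lim_seq_spec _ _) HMlim (mkposreal _ He)) as [K HK].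
  specialize (HK K (le_n K)); simpl in HK; rewrite Rabs_minus_sym in HK.
  destruct (proj2 (is_lim_seq_spec _ _)
              (is_lim_seq_sum_n_0 _ K (fun k => proj1 (Clim_iff_Cmod _ _) (Hlim k)))
              (mkposreal _ He)) as [N0 HN0].
  exists (max N0 K); intros N HN; specialize (HN0 N ltac:(lia)); simpl in HN0.
  rewrite Rminus_0_r in HN0 |- *.
  rewrite Cminus_0_r, Rabs_pos_eq by apply Cmod_ge_0.
  assert (Htail : (sum_n_m (fun k => Cmod (f N k - g k)) (S K) N <= 2 * sum_n_m M (S K) N)%R).
  { rewrite <- (sum_n_m_mult_l 2); apply sum_n_m_le; intros k.
    unfold Cminus; eapply Rle_trans; [apply Cmod_triangle |]; rewrite Cmod_opp.
    change (mult 2 (M k)) with (2 * M k)%R; specialize (Hf N k); specialize (Hg k); lra. }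
  assert (HKN := sum_n_m_tail_le M SM K N HM0 HM ltac:(lia)).
  eapply Rle_lt_trans; [apply Cmod_sum_n_le |].
  unfold sum_n; rewrite (sum_n_m_Chasles _ 0 K N) by lia; unfold plus; simpl.
  assert (H1 := Rle_abs (sum_n (fun k => Cmod (f N k - g k)) K)).
  assert (H2 := Rle_abs (SM - sum_n M K)); unfold sum_n in *; lra.
Qed.

(** * Estimates for q-Pochhammer symbols *)

Lemma exp_le_mono (x y : R) : (x <= y)%R -> (exp x <= exp y)%R.
Proof. intros [H | ->]; [left; apply exp_increasing, H | right; reflexivity]. Qed.

Lemma exp_neg_le_1_sub (x y : R) : (0 <= x <= y)%R -> (y < 1)%R -> (exp (- (x / (1 - y))) <= 1 - x)%R.
Proof.
  intros Hx Hy.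
  assert (H : (1 / (1 - x) <= 1 + x / (1 - y))%R).
  { apply (Rmult_le_reg_r ((1 - x) * (1 - y))); [apply Rmult_lt_0_compat; lra |].
    field_simplify; try lra; nra. }
  assert (Hexp := exp_ineq1_le (x / (1 - y))).
  rewrite exp_Ropp; apply (Rmult_le_reg_r (exp (x / (1 - y)))); [apply exp_pos |].
  rewrite Rinv_l by (apply Rgt_not_eq, exp_pos).
  apply (Rmult_le_compat_l (1 - x)) in H; [| lra].
  replace ((1 - x) * (1 / (1 - x)))%R with 1%R in H by (field; lra); nra.
Qed.

Lemma pow_le_1 (x : R) (n : nat) : (0 <= x <= 1)%R -> (x ^ n <= 1)%R.
Proof. intros H; rewrite <- (pow1 n); apply pow_incr, H. Qed.

Lemma Rdiv_le_bounds (x X y d : R) : (0 <= x <= X)%R -> (0 < d <= y)%R -> (x / y <= X / d)%R.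
Proof.
  intros Hx Hy; unfold Rdiv; apply Rmult_le_compat; try lra.
  - apply Rlt_le, Rinv_0_lt_compat; lra.
  - apply Rinv_le_contravar; lra.
Qed.

Lemma Cmod_RtoC_nonneg (x : R) : (0 <= x)%R -> Cmod (RtoC x) = x.
Proof. intros; rewrite Cmod_R, Rabs_pos_eq; auto. Qed.

Lemma Cmod_scal_pow (a : C) (q : R) (n : nat) :
  (0 <= q)%R -> Cmod (a * RtoC (q ^ n)) = (Cmod a * q ^ n)%R.
Proof. intros; rewrite Cmod_mult, Cmod_RtoC_nonneg; auto using pow_le. Qed.

Lemma Cmod_1_sub_le (w : C) : (Cmod (1 - w) <= 1 + Cmod w)%R.
Proof. unfold Cminus; eapply Rle_trans; [apply Cmod_triangle |]; rewrite Cmod_opp, Cmod_1; lra. Qed.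

Lemma Cmod_1_sub_ge (w : C) : (1 - Cmod w <= Cmod (1 - w))%R.
Proof.
  assert (H := Cmod_triangle (1 - w) w).
  replace (1 - w + w) with (RtoC 1) in H by ring; rewrite Cmod_1 in H; lra.
Qed.

Lemma qpoch_add (a : C) (q : R) (k m : nat) :
  qpoch a q (k + m) = qpoch a q k * qpoch (a * RtoC (q ^ k)) q m.
Proof.
  induction m as [|m IH]; [rewrite Nat.add_0_r; simpl; ring |].
  rewrite Nat.add_succ_r; simpl qpoch; rewrite IH, pow_add, RtoC_mult; ring.
Qed.

Section QPochhammer.

Variable q : R.
Hypothesis Hq : (0 <= q < 1)%R.

Lemma Cmod_qpoch_le (a : C) (n : nat) : (Cmod (qpoch a q n) <= exp (Cmod a / (1 - q)))%R.
Proof.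
  assert (Hqn : (0 <= q ^ n)%R) by (apply pow_le; lra).
  enough (H : (Cmod (qpoch a q n) <= exp (Cmod a * (1 - q ^ n) / (1 - q)))%R).
  { eapply Rle_trans; [exact H |]; apply exp_le_mono.
    assert (Ha := Cmod_ge_0 a); unfold Rdiv; apply Rmult_le_compat_r;
      [apply Rlt_le, Rinv_0_lt_compat; lra | nra]. }
  clear Hqn; induction n as [|n IH].
  - simpl; rewrite Cmod_1; replace (Cmod a * (1 - 1) / (1 - q))%R with 0%R by (field; lra).
    rewrite exp_0; lra.
  - simpl qpoch; rewrite Cmod_mult.
    eapply Rle_trans;
      [apply Rmult_le_compat; [apply Cmod_ge_0 | apply Cmod_ge_0 | apply IH | apply Cmod_1_sub_le] |].
    rewrite Cmod_scal_pow by lra.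
    eapply Rle_trans; [apply Rmult_le_compat_l; [apply Rlt_le, exp_pos | apply exp_ineq1_le] |].
    rewrite <- exp_plus; right; f_equal; simpl; field; lra.
Qed.

Lemma qpoch_bounded_below (a : C) :
  (Cmod a < 1)%R -> exists d, (0 < d)%R /\ forall n, (d <= Cmod (qpoch a q n))%R.
Proof.
  intros Ha; assert (Ha0 := Cmod_ge_0 a).
  exists (exp (- (Cmod a / ((1 - Cmod a) * (1 - q))))); split; [apply exp_pos | intros n].
  assert (Hqn : (0 <= q ^ n <= 1)%R) by (split; [apply pow_le | apply pow_le_1]; lra).
  enough (H : (exp (- (Cmod a * (1 - q ^ n) / ((1 - Cmod a) * (1 - q)))) <= Cmod (qpoch a q n))%R).
  { eapply Rle_trans; [| exact H]; apply exp_le_mono, Ropp_le_contravar.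
    unfold Rdiv; apply Rmult_le_compat_r;
      [apply Rlt_le, Rinv_0_lt_compat, Rmult_lt_0_compat; lra | nra]. }
  clear Hqn; induction n as [|n IH].
  - simpl; rewrite Cmod_1.
    replace (Cmod a * (1 - 1) / ((1 - Cmod a) * (1 - q)))%R with 0%R by (field; lra).
    rewrite Ropp_0, exp_0; lra.
  - simpl qpoch; rewrite Cmod_mult.
    assert (Hqn : (0 <= q ^ n <= 1)%R) by (split; [apply pow_le | apply pow_le_1]; lra).
    assert (Hfactor : (exp (- (Cmod a * q ^ n / (1 - Cmod a))) <= Cmod (1 - a * RtoC (q ^ n)))%R).
    { eapply Rle_trans; [apply exp_neg_le_1_sub; [split; nra | exact Ha] |].
      rewrite <- Cmod_scal_pow by lra; apply Cmod_1_sub_ge. }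
    eapply Rle_trans;
      [| apply Rmult_le_compat; [apply Rlt_le, exp_pos | apply Rlt_le, exp_pos | apply IH | apply Hfactor]].
    rewrite <- exp_plus; right; f_equal; simpl; field; lra.
Qed.

Lemma qpoch_neq0 (a : C) (n : nat) : (Cmod a < 1)%R -> qpoch a q n <> 0.
Proof.
  intros Ha E; destruct (qpoch_bounded_below a Ha) as [d [Hd Hlow]].
  specialize (Hlow n); rewrite E, Cmod_0 in Hlow; lra.
Qed.

Lemma qpoch_inf_exists (a : C) : exists L, qpoch_inf_is a q L.
Proof.
  set (d := fun i => qpoch a q (S i) - qpoch a q i).
  destruct (ex_series_Cmod_le d (fun i => exp (Cmod a / (1 - q)) * Cmod a * q ^ i)%R) as [l Hl].
  - intros i; unfold d; simpl qpoch.
    replace (qpoch a q i * (1 - a * RtoC (q ^ i)) - qpoch a q i)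
      with (- (qpoch a q i * (a * RtoC (q ^ i)))) by ring.
    rewrite Cmod_opp, Cmod_mult, Cmod_scal_pow, <- Rmult_assoc by lra.
    apply Rmult_le_compat_r; [apply pow_le; lra |].
    apply Rmult_le_compat_r; [apply Cmod_ge_0 | apply Cmod_qpoch_le].
  - eexists; apply is_series_geom_scal; lra.
  - assert (Htele : forall n, sum_n d n + 1 = qpoch a q (S n)).
    { induction n as [|n IH]; [rewrite sum_O; unfold d; simpl; ring |].
      rewrite Csum_n_S; unfold d at 2; rewrite <- IH; ring. }
    exists (l + 1); unfold qpoch_inf_is; apply (filterlim_shift_iff _ _ 1).
    apply (filterlim_ext (fun n => sum_n d n + 1));
      [intros n; rewrite Nat.add_1_r; apply Htele | apply Clim_plus; [exact Hl | apply filterlim_const]].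
Qed.

Lemma qpoch_inf_neq0 (a L : C) : (Cmod a < 1)%R -> qpoch_inf_is a q L -> L <> 0.
Proof.
  intros Ha HL E; destruct (qpoch_bounded_below a Ha) as [d [Hd Hlow]].
  assert (H := Clim_Cmod_ge _ _ _ HL Hlow); rewrite E, Cmod_0 in H; lra.
Qed.

End QPochhammer.

Lemma qpoch_inf_shift (a L : C) (q : R) (k : nat) :
  qpoch a q k <> 0 -> qpoch_inf_is a q L ->
  qpoch_inf_is (a * RtoC (q ^ k)) q (L / qpoch a q k).
Proof.
  intros Hk HL; unfold qpoch_inf_is.
  apply (filterlim_ext (fun m => qpoch a q (m + k) * / qpoch a q k)).
  - intros m; rewrite Nat.add_comm, qpoch_add; field; exact Hk.
  - apply Clim_mult; [apply filterlim_shift_iff, HL | apply filterlim_const].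
Qed.

(** * The q-binomial theorem *)

Definition qbin_coef (a : C) (q : R) (m : nat) : C := qpoch a q m / qpoch (RtoC q) q m.

Section QBinomial.

Variable q : R.
Hypothesis Hq : (0 <= q < 1)%R.

Lemma qpoch_q_neq0 (m : nat) : qpoch (RtoC q) q m <> 0.
Proof. apply qpoch_neq0; [exact Hq | rewrite Cmod_RtoC_nonneg; lra]. Qed.

Lemma qbin_coef_bounded (r : R) :
  exists B, (0 < B)%R /\ forall a m, (Cmod a <= r)%R -> (Cmod (qbin_coef a q m) <= B)%R.
Proof.
  destruct (qpoch_bounded_below q Hq (RtoC q)) as [d [Hd Hlow]];
    [rewrite Cmod_RtoC_nonneg; lra |].
  exists (exp (r / (1 - q)) / d)%R; split; [apply Rdiv_lt_0_compat; [apply exp_pos | exact Hd] |].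
  intros a m Ha; unfold qbin_coef; rewrite Cmod_div by apply qpoch_q_neq0.
  apply Rdiv_le_bounds; [split; [apply Cmod_ge_0 |] | split; [exact Hd | apply Hlow]].
  eapply Rle_trans; [apply Cmod_qpoch_le; exact Hq |].
  apply exp_le_mono; unfold Rdiv; apply Rmult_le_compat_r; [apply Rlt_le, Rinv_0_lt_compat; lra | exact Ha].
Qed.

Lemma qbin_coef_S (a : C) (m : nat) :
  qbin_coef a q (S m) * (1 - RtoC (q ^ S m)) = qbin_coef a q m * (1 - a * RtoC (q ^ m)).
Proof.
  assert (H := qpoch_q_neq0 (S m)); assert (Hm := qpoch_q_neq0 m).
  unfold qbin_coef; simpl qpoch in *.
  assert (Hfactor : 1 - RtoC q * RtoC (q ^ m) <> 0) by (intros E; apply H; rewrite E; ring).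
  simpl pow; rewrite RtoC_mult; field; split; assumption.
Qed.

Lemma ex_qbin_series (a y : C) : (Cmod y < 1)%R -> ex_series (fun m => qbin_coef a q m * y ^ m).
Proof.
  intros Hy; destruct (qbin_coef_bounded (Cmod a)) as [B [_ HB]].
  apply (ex_series_Cmod_le _ (fun m => B * Cmod y ^ m)%R).
  - intros m; rewrite Cmod_mult, Cmod_pow.
    apply Rmult_le_compat_r; [apply pow_le, Cmod_ge_0 | apply HB; lra].
  - eexists; apply is_series_geom_scal; split; [apply Cmod_ge_0 | exact Hy].
Qed.

Lemma qbin_series_functional_eq (a y F1 F2 : C) :
  is_series (fun m => qbin_coef a q m * y ^ m) F1 ->
  is_series (fun m => qbin_coef a q m * (RtoC q * y) ^ m) F2 ->
  (1 - y) * F1 = (1 - a * y) * F2.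
Proof.
  intros H1 H2.
  set (h := fun m => qbin_coef a q m * y ^ m - qbin_coef a q m * (RtoC q * y) ^ m).
  assert (Hh : is_series h (F1 - F2)) by exact (is_series_minus _ _ _ _ H1 H2).
  assert (Hh0 : h 0%nat = 0) by (unfold h; simpl; ring).
  assert (Htail : is_series (fun m => h (S m)) (F1 - F2)).
  { apply is_series_incr_1; rewrite Hh0; change (plus (F1 - F2) (RtoC 0)) with (F1 - F2 + 0).
    rewrite Cplus_0_r; exact Hh. }
  assert (Htail' : is_series (fun m => h (S m)) (y * (F1 - a * F2))).
  { apply (is_series_ext (fun m => y * (qbin_coef a q m * y ^ m - a * (qbin_coef a q m * (RtoC q * y) ^ m)))).
    - intros m; unfold h; rewrite !Cpow_mult_l, <- !RtoC_pow.
      replace (qbin_coef a q (S m) * y ^ S m - qbin_coef a q (S m) * (RtoC (q ^ S m) * y ^ S m))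
        with (qbin_coef a q (S m) * (1 - RtoC (q ^ S m)) * y ^ S m) by ring.
      rewrite qbin_coef_S; simpl; ring.
    - exact (is_series_scal_l _ _ _ (is_series_minus _ _ _ _ H1 (is_series_scal_l a _ _ H2))). }
  assert (E := is_series_C_unique _ _ _ Htail Htail').
  transitivity ((1 - a * y) * F2 + (F1 - F2 - y * (F1 - a * F2))); [ring |].
  rewrite E; ring.
Qed.

Lemma qbin_series_iter (a x F0 : C) :
  (Cmod x < 1)%R -> is_series (fun m => qbin_coef a q m * x ^ m) F0 ->
  forall n, exists Fn, is_series (fun m => qbin_coef a q m * (RtoC (q ^ n) * x) ^ m) Fn
                  /\ F0 * qpoch x q n = qpoch (a * x) q n * Fn.
Proof.
  intros Hx H0; induction n as [|n [Fn [HFn En]]].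
  - exists F0; split; [| simpl; ring].
    apply (is_series_ext (fun m => qbin_coef a q m * x ^ m)); [| exact H0].
    intros m; simpl; rewrite Cmult_1_l; reflexivity.
  - assert (Hy : (Cmod (RtoC (q ^ S n) * x) < 1)%R).
    { rewrite Cmod_mult, Cmod_RtoC_nonneg by (apply pow_le; lra).
      assert (Hqn : (q ^ S n <= 1)%R) by (apply pow_le_1; lra).
      assert (Hx0 := Cmod_ge_0 x); nra. }
    destruct (ex_qbin_series a _ Hy) as [F' HF'].
    exists F'; split; [exact HF' |].
    assert (Efe : (1 - RtoC (q ^ n) * x) * Fn = (1 - a * (RtoC (q ^ n) * x)) * F').
    { apply qbin_series_functional_eq; [exact HFn |].
      apply (is_series_ext (fun m => qbin_coef a q m * (RtoC (q ^ S n) * x) ^ m)); [| exact HF'].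
      intros m; simpl; rewrite RtoC_mult, Cmult_assoc; reflexivity. }
    simpl qpoch.
    transitivity ((F0 * qpoch x q n) * (1 - x * RtoC (q ^ n))); [ring |].
    rewrite En.
    transitivity (qpoch (a * x) q n * ((1 - RtoC (q ^ n) * x) * Fn)); [ring |].
    rewrite Efe; ring.
Qed.

Lemma qbin_series_sub_1_le (a y F : C) (B : R) :
  (forall m, Cmod (qbin_coef a q m) <= B)%R -> (Cmod y < 1)%R ->
  is_series (fun m => qbin_coef a q m * y ^ m) F -> (Cmod (F - 1) <= B * Cmod y / (1 - Cmod y))%R.
Proof.
  intros HB Hy HF.
  assert (Htail : is_series (fun m => qbin_coef a q (S m) * y ^ S m) (F - 1)).
  { apply (is_series_incr_1 (fun m => qbin_coef a q m * y ^ m)); unfold qbin_coef; simpl.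
    change (plus (F - 1) (1 / 1 * 1)) with (F - 1 + 1 / 1 * 1).
    replace (F - 1 + 1 / 1 * 1) with F by (field; apply C1_neq_C0); exact HF. }
  eapply is_series_Cmod_le; [exact Htail | | apply is_series_geom_scal; split; [apply Cmod_ge_0 | exact Hy]].
  intros m; simpl; rewrite !Cmod_mult, Cmod_pow, <- Rmult_assoc.
  apply Rmult_le_compat_r; [apply pow_le, Cmod_ge_0 |].
  apply Rmult_le_compat_r; [apply Cmod_ge_0 | apply HB].
Qed.

Theorem qbinomial (a x La Lx : C) :
  (Cmod x < 1)%R -> qpoch_inf_is (a * x) q La -> qpoch_inf_is x q Lx -> Lx <> 0 ->
  is_series (fun m => qbin_coef a q m * x ^ m) (La / Lx).
Proof.
  intros Hx HLa HLx HLx0.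
  destruct (ex_qbin_series a x Hx) as [F0 H0].
  destruct (qbin_coef_bounded (Cmod a)) as [B [HB HcoefB]].
  assert (Hx0 := Cmod_ge_0 x).
  set (c := (exp (Cmod (a * x) / (1 - q)) * (B * Cmod x / (1 - Cmod x)))%R).
  assert (Hgap : forall n, (Cmod (F0 * qpoch x q n - qpoch (a * x) q n) <= c * q ^ n)%R).
  { intros n; destruct (qbin_series_iter a x F0 Hx H0 n) as [Fn [HFn En]].
    assert (Hqn : (0 <= q ^ n <= 1)%R) by (split; [apply pow_le | apply pow_le_1]; lra).
    assert (Hy : Cmod (RtoC (q ^ n) * x) = (q ^ n * Cmod x)%R)
      by (rewrite Cmod_mult, Cmod_RtoC_nonneg; lra).
    assert (Hy1 : (Cmod (RtoC (q ^ n) * x) < 1)%R) by (rewrite Hy; nra).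
    rewrite En; replace (qpoch (a * x) q n * Fn - qpoch (a * x) q n)
      with (qpoch (a * x) q n * (Fn - 1)) by ring.
    unfold c; rewrite Cmod_mult, Rmult_assoc.
    apply Rmult_le_compat; try apply Cmod_ge_0; [apply Cmod_qpoch_le; exact Hq |].
    eapply Rle_trans; [apply (qbin_series_sub_1_le a (RtoC (q ^ n) * x) Fn B); [intros; apply HcoefB; lra | exact Hy1 | exact HFn] |].
    rewrite Hy; replace (B * Cmod x / (1 - Cmod x) * q ^ n)%R with (B * (q ^ n * Cmod x) / (1 - Cmod x))%R
      by (field; lra).
    apply Rdiv_le_bounds; [split; [apply Rmult_le_pos; nra | lra] | nra]. }
  assert (Hlim : filterlim (fun n => F0 * qpoch x q n - qpoch (a * x) q n) eventually
                   (locally (F0 * Lx - La))).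
  { apply (filterlim_ext (fun n => F0 * qpoch x q n + (-1) * qpoch (a * x) q n)); [intros; ring |].
    replace (F0 * Lx - La) with (F0 * Lx + (-1) * La) by ring.
    apply Clim_plus; apply Clim_mult; auto; apply filterlim_const. }
  assert (HF0 : F0 * Lx - La = 0) by (apply (Clim_eq0_of_geom_bound _ _ c q Hq Hlim Hgap)).
  assert (HLa0 : La = F0 * Lx :> C)
    by (transitivity (F0 * Lx - (F0 * Lx - La)); [ring | rewrite HF0; ring]).
  assert (Hcancel : F0 * Lx / Lx = F0 :> C) by (field; exact HLx0).
  rewrite HLa0, Hcancel; exact H0.
Qed.

End QBinomial.

(** * The identity *)

Lemma qexp_bounds (q : R) (k : nat) : (0 <= q <= 1)%R -> (0 <= qexp q k <= (q ^ k) ^ k)%R.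
Proof.
  intros Hq; unfold qexp; rewrite <- pow_mult.
  assert (Hs : (0 <= sqrt q <= 1)%R)
    by (split; [apply sqrt_pos | rewrite <- sqrt_1; apply sqrt_le_1_alt; lra]).
  assert (H1 := pow_le_1 (sqrt q) k Hs); assert (H2 := pow_le (sqrt q) k (proj1 Hs)).
  assert (H3 : (0 <= q ^ (k * k))%R) by (apply pow_le; lra); split; nra.
Qed.

Lemma pow_pow_le_geom (w q : R) :
  (0 <= q < 1)%R -> (0 <= w)%R -> exists D, forall k, ((w * q ^ k) ^ k <= D * (1 / 2) ^ k)%R.
Proof.
  intros Hq Hw.
  assert (Hl : is_lim_seq (fun n => q ^ n)%R 0%R) by (apply is_lim_seq_geom; rewrite Rabs_pos_eq; lra).
  apply is_lim_seq_spec in Hl.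
  assert (He : (0 < / (2 * w + 1))%R) by (apply Rinv_0_lt_compat; lra).
  destruct (Hl (mkposreal _ He)) as [K HK]; simpl in HK.
  set (m := Rmax 1 (2 * w)); assert (Hm1 : (1 <= m)%R) by apply Rmax_l.
  exists (m ^ K)%R; intros k.
  replace ((w * q ^ k) ^ k)%R with ((2 * w * q ^ k) ^ k * (1 / 2) ^ k)%R
    by (rewrite <- Rpow_mult_distr; f_equal; field).
  apply Rmult_le_compat_r; [apply pow_le; lra |].
  assert (Hqk : (0 <= q ^ k <= 1)%R) by (split; [apply pow_le | apply pow_le_1]; lra).
  destruct (Compare_dec.le_lt_dec K k) as [Hk | Hk].
  - specialize (HK k Hk); rewrite Rminus_0_r, Rabs_pos_eq in HK by lra.
    assert (H1 : (2 * w * q ^ k <= 1)%R).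
    { apply (Rmult_lt_compat_l (2 * w + 1)) in HK; [| lra]; rewrite Rinv_r in HK by lra; nra. }
    eapply Rle_trans; [apply pow_incr; split; [nra | exact H1] |].
    rewrite pow1; apply pow_R1_Rle, Hm1.
  - assert (H2 : (2 * w <= m)%R) by apply Rmax_r.
    eapply Rle_trans; [apply pow_incr; split; [nra | instantiate (1 := m); nra] |].
    apply Rle_pow; [exact Hm1 | lia].
Qed.

Lemma lhs_coef_convolution (a : C) (q : R) (z t : C) (n : nat) :
  (0 <= q < 1)%R -> (Cmod a < 1)%R ->
  qpoch a q n / qpoch (RtoC q) q n *
    sum_n (fun k => qbinom q n k * qexp q k / qpoch a q k * z ^ k) n * t ^ n
  = sum_n (fun k => (RtoC (qexp q k) / qpoch (RtoC q) q k * (z * t) ^ k) *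
                    (qbin_coef (a * RtoC (q ^ k)) q (n - k) * t ^ (n - k))) n.
Proof.
  intros Hq Ha.
  transitivity (sum_n (fun k => qpoch a q n / qpoch (RtoC q) q n * t ^ n *
                  (qbinom q n k * qexp q k / qpoch a q k * z ^ k)) n);
    [rewrite Csum_n_mult_l; ring |].
  apply Csum_n_ext_loc; intros k Hk.
  destruct (Nat.le_exists_sub k n Hk) as [m [-> _]].
  replace (m + k - k)%nat with m by lia; rewrite (Nat.add_comm m k).
  rewrite qpoch_add, Cpow_add_r, Cpow_mult_l; unfold qbinom, qbin_coef.
  replace (k + m - k)%nat with m by lia.
  assert (Hak := qpoch_neq0 q Hq a k Ha).
  assert (HQ := qpoch_q_neq0 q Hq (k + m)); assert (HQk := qpoch_q_neq0 q Hq k);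
    assert (HQm := qpoch_q_neq0 q Hq m).
  field; repeat split; assumption.
Qed.

Section Identity.

Variables (q p : R) (z t : C).
Hypotheses (Hq : (0 < q < 1)%R) (Hp : (0 <= p < 1)%R) (Ht : (Cmod t < 1)%R).

Let u (k : nat) : C := RtoC (qexp q k) / qpoch (RtoC q) q k * (z * t) ^ k.
Let inner (k m : nat) : C := qbin_coef (RtoC p * RtoC (q ^ k)) q m * t ^ m.

Lemma Cmod_pt_lt_1 : (Cmod (RtoC p * t) < 1)%R.
Proof. rewrite Cmod_mult, Cmod_RtoC_nonneg by lra; assert (H := Cmod_ge_0 t); nra. Qed.

Lemma qpoch_pt_neq0 (k : nat) : qpoch (RtoC p * t) q k <> 0.
Proof. apply qpoch_neq0; [lra | exact Cmod_pt_lt_1]. Qed.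

Lemma Cmod_u_le_geom : exists c, forall k, (Cmod (u k) <= c * (1 / 2) ^ k)%R.
Proof.
  destruct (qpoch_bounded_below q ltac:(lra) (RtoC q)) as [dQ [HdQ Hlow]];
    [rewrite Cmod_RtoC_nonneg; lra |].
  destruct (pow_pow_le_geom (Cmod (z * t)) q ltac:(lra) (Cmod_ge_0 _)) as [D HD].
  exists (D / dQ)%R; intros k; unfold u.
  assert (Hq' := qexp_bounds q k ltac:(lra)).
  assert (Hzt := pow_le _ k (Cmod_ge_0 (z * t))).
  rewrite Cmod_mult, Cmod_div by (apply qpoch_q_neq0; lra).
  rewrite Cmod_RtoC_nonneg, Cmod_pow by tauto.
  replace (D / dQ * (1 / 2) ^ k)%R with (D * (1 / 2) ^ k / dQ)%R by (field; lra).
  replace (qexp q k / Cmod (qpoch (RtoC q) q k) * Cmod (z * t) ^ k)%R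
    with (qexp q k * Cmod (z * t) ^ k / Cmod (qpoch (RtoC q) q k))%R
    by (field; apply Rgt_not_eq, (Rlt_le_trans _ dQ); [lra | apply Hlow]).
  apply Rdiv_le_bounds; [split; [nra |] | split; [exact HdQ | apply Hlow]].
  eapply Rle_trans; [| apply HD]; rewrite Rpow_mult_distr, <- pow_mult, (Rmult_comm _ (q ^ (k * k))).
  rewrite pow_mult; apply Rmult_le_compat_r; [exact Hzt | tauto].
Qed.

Lemma ex_series_Cmod_u : ex_series (fun k => Cmod (u k)).
Proof.
  destruct Cmod_u_le_geom as [c Hc].
  apply (@ex_series_le R_AbsRing R_CompleteNormedModule _ (fun k => c * (1 / 2) ^ k)%R).
  - intros k; change (norm (Cmod (u k))) with (Rabs (Cmod (u k))).
    rewrite Rabs_pos_eq by apply Cmod_ge_0; apply Hc.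
  - eexists; apply is_series_geom_scal; lra.
Qed.

Lemma rhs_summable :
  ex_series (fun n => qexp q n / (qpoch (RtoC p * t) q n * qpoch (RtoC q) q n) * (z * t) ^ n).
Proof.
  destruct (qpoch_bounded_below q ltac:(lra) _ Cmod_pt_lt_1) as [dP [HdP Hlow]].
  apply (ex_series_Cmod_le _ (fun k => Cmod (u k) / dP)%R); [| apply ex_series_scal_r, ex_series_Cmod_u].
  intros k.
  replace (qexp q k / (qpoch (RtoC p * t) q k * qpoch (RtoC q) q k) * (z * t) ^ k)
    with (u k / qpoch (RtoC p * t) q k)
    by (unfold u; field; split; [apply qpoch_q_neq0; lra | apply qpoch_pt_neq0]).
  rewrite Cmod_div by apply qpoch_pt_neq0.
  apply Rdiv_le_bounds; [split; [apply Cmod_ge_0 | lra] | split; [exact HdP | apply Hlow]].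
Qed.

Lemma inner_bounded : exists B, forall k m, (Cmod (inner k m) <= B * Cmod t ^ m)%R.
Proof.
  destruct (qbin_coef_bounded q ltac:(lra) 1) as [B [_ HB]]; exists B.
  intros k m; unfold inner; rewrite Cmod_mult, Cmod_pow.
  apply Rmult_le_compat_r; [apply pow_le, Cmod_ge_0 | apply HB].
  rewrite Cmod_mult, !Cmod_RtoC_nonneg by (try apply pow_le; lra).
  assert (Hqk : (q ^ k <= 1)%R) by (apply pow_le_1; lra); nra.
Qed.

Lemma inner_is_series (Ppt Pt : C) (k : nat) :
  qpoch_inf_is (RtoC p * t) q Ppt -> qpoch_inf_is t q Pt -> Pt <> 0 ->
  is_series (inner k) (Ppt / qpoch (RtoC p * t) q k / Pt).
Proof.
  intros HPpt HPt HPt0; apply qbinomial; [lra | exact Ht | | exact HPt | exact HPt0].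
  replace (RtoC p * RtoC (q ^ k) * t) with (RtoC p * t * RtoC (q ^ k)) by ring.
  apply qpoch_inf_shift; [apply qpoch_pt_neq0 | exact HPpt].
Qed.

Lemma lhs_partial_sum (N : nat) :
  sum_n (fun n => qpoch (RtoC p) q n / qpoch (RtoC q) q n *
      sum_n (fun k => qbinom q n k * qexp q k / qpoch (RtoC p) q k * z ^ k) n * t ^ n) N
  = sum_n (fun k => u k * sum_n (inner k) (N - k)) N.
Proof.
  rewrite (Csum_n_ext_loc (fun k => u k * sum_n (inner k) (N - k))
             (fun k => sum_n (fun m => u k * inner k m) (N - k)))
    by (intros; symmetry; apply Csum_n_mult_l).
  rewrite <- (Csum_n_antidiagonal (fun k m => u k * inner k m)).
  apply Csum_n_ext_loc; intros n _; unfold u, inner.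
  apply lhs_coef_convolution; [lra | rewrite Cmod_RtoC_nonneg; lra].
Qed.

Lemma lhs_is_series (Ppt Pt S : C) :
  qpoch_inf_is (RtoC p * t) q Ppt -> qpoch_inf_is t q Pt -> Pt <> 0 ->
  is_series (fun n => qexp q n / (qpoch (RtoC p * t) q n * qpoch (RtoC q) q n) * (z * t) ^ n) S ->
  is_series (fun n => qpoch (RtoC p) q n / qpoch (RtoC q) q n *
      sum_n (fun k => qbinom q n k * qexp q k / qpoch (RtoC p) q k * z ^ k) n * t ^ n)
    (Ppt / Pt * S).
Proof.
  intros HPpt HPt HPt0 HS.
  destruct inner_bounded as [B HB].
  assert (Hgeom := is_series_geom_scal B (Cmod t) ltac:(split; [apply Cmod_ge_0 | exact Ht])).
  unfold is_series.
  apply (filterlim_ext (fun N => sum_n (fun k => u k * sum_n (inner k) (N - k)) N));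
    [intros N; symmetry; apply lhs_partial_sum |].
  apply (tannery _ (fun k => u k * (Ppt / qpoch (RtoC p * t) q k / Pt))
           (fun k => Cmod (u k) * (B / (1 - Cmod t)))%R).
  - intros N k; rewrite Cmod_mult; apply Rmult_le_compat_l; [apply Cmod_ge_0 |].
    eapply Rle_trans; [apply Cmod_sum_n_le |].
    eapply Rle_trans; [apply sum_n_Rle, HB |].
    apply sum_n_le_is_series; [| exact Hgeom].
    intros m; eapply Rle_trans; [apply Cmod_ge_0 | apply (HB 0%nat)].
  - apply ex_series_scal_r, ex_series_Cmod_u.
  - intros k; apply Clim_mult; [apply filterlim_const |].
    apply filterlim_sub_nat, inner_is_series; assumption.
  - assert (Hterm : forall k, Ppt / Pt * (qexp q k / (qpoch (RtoC p * t) q k * qpoch (RtoC q) q k)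
                      * (z * t) ^ k) = u k * (Ppt / qpoch (RtoC p * t) q k / Pt) :> C).
    { intros k; unfold u; field.
      repeat split; [apply qpoch_pt_neq0 | exact HPt0 | apply qpoch_q_neq0; lra]. }
    exact (is_series_ext _ _ _ Hterm (is_series_scal_l _ _ _ HS)).
Qed.

End Identity.

Theorem lemma1 (q p : R) (z t : C) :
  (0 < q < 1)%R -> (0 <= p < 1)%R -> (Cmod t < 1)%R ->
  exists (Ppt Pt S : C),
    qpoch_inf_is (RtoC p * t) q Ppt /\
    qpoch_inf_is t q Pt /\ Pt <> 0 /\
    is_series (fun n : nat =>
      qexp q n / (qpoch (RtoC p * t) q n * qpoch (RtoC q) q n) * (z * t) ^ n) S /\
    is_series (fun n : nat =>
      qpoch (RtoC p) q n / qpoch (RtoC q) q n *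
      sum_n (fun k : nat =>
        qbinom q n k * qexp q k / qpoch (RtoC p) q k * z ^ k) n * t ^ n)
      (Ppt / Pt * S).
Proof.
  intros Hq Hp Ht.
  destruct (qpoch_inf_exists q ltac:(lra) (RtoC p * t)) as [Ppt HPpt].
  destruct (qpoch_inf_exists q ltac:(lra) t) as [Pt HPt].
  assert (HPt0 : Pt <> 0) by exact (qpoch_inf_neq0 q ltac:(lra) t Pt Ht HPt).
  destruct (rhs_summable q p z t Hq Hp Ht) as [S HS].
  exists Ppt, Pt, S; repeat split; try assumption.
  exact (lhs_is_series q p z t Hq Hp Ht Ppt Pt S HPpt HPt HPt0 HS).
Qed.
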